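(* Let $R(u,s)=\sqrt{u^3/3+u^2+s}$, $\rho(s)=\dfrac{5}{3s(3s+4)}$, $$P(u,s)=\tfrac{2}{15}\Bigl[u(2-u)(3+u)^2+6s(1+u)\Bigr],\qquad Q(u,s)=\rho(s)\frac{P(u,s)}{R(u,s)}.$$ Then, wherever $s\notin\{0,-4/3\}$ and $R(u,s)\neq0$ (with the same branch of $R$ used in $Q$ and on the right side), $$\frac{\partial Q}{\partial u}=\frac{1}{R(u,s)^3}-\rho(s)R(u,s).$$ Consequently, if $\mathcal{C}$ is a closed piecewise smooth curve and $s$ ranges over an open set on which no root of $u^3/3+u^2+s$ meets $\mathcal{C}$ and $R(\cdot,s)$ has a single-valued continuous branch along $\mathcal{C}$ depending analytically on $s$, then with $$J(s)=\oint_{\mathcal{C}}R(v,s)\,dv,\qquad L(s)=\oint_{\mathcal{C}}\frac{dv}{R(v,s)}$$ we have $$\frac{dJ}{ds}=\frac12 L(s),\qquad \frac{dL}{ds}=-\oint_{\mathcal{C}}\frac{dv}{2R(v,s)^3}=-\frac12\rho(s)J(s).$$ *)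

From Stdlib Require Import Reals.
From Coquelicot Require Import Coquelicot.
Open Scope C_scope.

Definition fcub (u s : C) : C := u * u * u / RtoC 3 + u * u + s.

Definition rho (s : C) : C := RtoC 5 / (RtoC 3 * s * (RtoC 3 * s + RtoC 4)).

Definition Pp (u s : C) : C :=
  RtoC 2 / RtoC 15 *
  (u * (RtoC 2 - u) * ((RtoC 3 + u) * (RtoC 3 + u)) + RtoC 6 * s * (RtoC 1 + u)).

Record cpiece := CPiece { pg : R -> C; pdg : R -> C; pa : R; pb : R }.

Definition smooth_piece (p : cpiece) : Prop :=
  (pa p < pb p)%R /\
  (forall t, (pa p <= t <= pb p)%R ->
     @is_derive R_AbsRing C_R_NormedModule (pg p) t (pdg p t)) /\
  (forall t, (pa p <= t <= pb p)%R ->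
     @continuous R_UniformSpace C_R_NormedModule (pdg p) t).

Definition closed_pw_smooth (c : nat -> cpiece) (n : nat) : Prop :=
  (0 < n)%nat /\
  (forall i, (i < n)%nat -> smooth_piece (c i)) /\
  (forall i, (S i < n)%nat -> pg (c i) (pb (c i)) = pg (c (S i)) (pa (c (S i)))) /\
  pg (c (pred n)) (pb (c (pred n))) = pg (c O) (pa (c O)).

Fixpoint csum (n : nat) (a : nat -> C) : C :=
  match n with O => RtoC 0 | S m => csum m a + a m end.

(* Contour integral over the curve of an integrand given along the curve:
   F i t is the value of the integrand at the point pg (c i) t of piece i.
   \oint F dv = sum_i \int_{a_i}^{b_i} F i t * g_i'(t) dt. *)
Definition cint (c : nat -> cpiece) (n : nat) (F : nat -> R -> C) : C :=
  csum n (fun i => @RInt C_R_CompleteNormedModule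
                      (fun t => F i t * pdg (c i) t) (pa (c i)) (pb (c i))).

(* B is a single-valued continuous branch of R(v,s) = sqrt(fcub v s) along the
   curve, for s in U: B i t s is the value at the point pg (c i) t; no root of
   fcub(.,s) lies on the curve; B is continuous along each piece, matches at the
   junctions (single-valued, including closing up) and depends analytically on s. *)
Definition branch_along (c : nat -> cpiece) (n : nat) (U : C -> Prop)
    (B : nat -> R -> C -> C) : Prop :=
  forall s, U s ->
    (forall i t, (i < n)%nat -> (pa (c i) <= t <= pb (c i))%R ->
       fcub (pg (c i) t) s <> RtoC 0 /\
       B i t s * B i t s = fcub (pg (c i) t) s /\
       filterlim (fun t' => B i t' s)
         (within (fun t' => (pa (c i) <= t' <= pb (c i))%R) (locally t))
         (locally (B i t s)) /\
       @ex_derive C_AbsRing C_NormedModule (fun z => B i t z) s) /\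
    (forall i, (S i < n)%nat -> B i (pb (c i)) s = B (S i) (pa (c (S i))) s) /\
    B (pred n) (pb (c (pred n))) s = B O (pa (c O)) s.

(* Write [Q v = rho s * P v / R v].  Dividing the differences of the cubic and of [P] by [v - u]
   and using [R v ^ 2 - R u ^ 2 = fcub v s - fcub u s] gives [Q v - Q u = (v - u) * Psi v u]
   with [Psi] continuous, and on the diagonal [Psi u u = 1 / R ^ 3 - rho R] by an algebraic
   identity; Caratheodory's criterion turns this into the derivative.  The same factorisation
   along a parametrised piece of the curve gives [d/dt Q (g t) = (1 / R ^ 3 - rho R) g'(t)] even
   though the branch is only continuous in [t], so integrating it piece by piece the boundary
   terms telescope around the closed curve: [K = rho J / 2].
   For the [s]-derivatives, [R ^ 2] depends on [s] only through [+ s], so [R (s + h)] is the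
   square root of [R s ^ 2 + h] nearer to [R s] (continuity in [s] and the intermediate value
   theorem), whence [R (s + h) = R s + h / (2 R s) + O (h ^ 2)] and likewise for [1 / R], with
   constants uniform along the curve because [|R|] is bounded below on each compact piece.
   Differentiating under the integral sign then gives [J' = L / 2] and [L' = - K]. *)

From Stdlib Require Import Reals Lra Lia Ranalysis5.
From Coquelicot Require Import Coquelicot.
Open Scope C_scope.
Set Bullet Behavior "Strict Subproofs".

Lemma RtoC_neq0 (r : R) : r <> 0%R -> RtoC r <> 0.
Proof. intros Hr E. apply RtoC_inj in E. exact (Hr E). Qed.

Lemma norm_C_R (z : C) : @norm R_AbsRing C_R_NormedModule z = Cmod z.
Proof.
  destruct z as [x y]. unfold norm; simpl. unfold prod_norm, Cmod; simpl.
  unfold norm; simpl; unfold abs; simpl. f_equal.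
  rewrite !Rmult_1_r, <- !Rabs_mult, !Rabs_right; try apply Rle_ge; nra.
Qed.

Lemma scal_C_R (r : R) (z : C) : @scal R_AbsRing C_R_NormedModule r z = RtoC r * z.
Proof.
  destruct z as [x y]. unfold scal; simpl. unfold prod_scal, Cmult; simpl.
  unfold scal; simpl; unfold mult; simpl. f_equal; ring.
Qed.

Lemma abs_minus_R (x y : R) : @abs R_AbsRing (@minus R_AbsRing y x) = Rabs (y - x).
Proof. reflexivity. Qed.

Lemma abs_minus_C (x y : C) : @abs C_AbsRing (@minus C_AbsRing y x) = Cmod (y - x).
Proof. reflexivity. Qed.

Lemma Cmod_sub_le (a b : C) : (Cmod (a - b) <= Cmod a + Cmod b)%R.
Proof. unfold Cminus. rewrite <- (Cmod_opp b). apply Cmod_triangle. Qed.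

Lemma Cmod_sub_sym (a b : C) : Cmod (a - b) = Cmod (b - a).
Proof. replace (a - b) with (- (b - a)) by ring. apply Cmod_opp. Qed.

Lemma Cmod_sub_ge (a b : C) : (Cmod a - Cmod b <= Cmod (a - b))%R.
Proof. replace a with ((a - b) + b) at 1 by ring. assert (T := Cmod_triangle (a - b) b). lra. Qed.

Lemma Cmod_Rabs_sub_le (a b : C) : (Rabs (Cmod a - Cmod b) <= Cmod (a - b))%R.
Proof.
  assert (H1 := Cmod_sub_ge a b). assert (H2 := Cmod_sub_ge b a).
  rewrite Cmod_sub_sym in H2. apply Rabs_le. lra.
Qed.

Lemma Cmod_RtoC_mult (r : R) (z : C) : Cmod (RtoC r * z) = (Rabs r * Cmod z)%R.
Proof. rewrite Cmod_mult, Cmod_R. reflexivity. Qed.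

Lemma Cmod_double (z : C) : Cmod (RtoC 2 * z) = (2 * Cmod z)%R.
Proof. rewrite Cmod_RtoC_mult, Rabs_right by lra. reflexivity. Qed.

(* Measured with [Cmod], so that it does not depend on which uniform structure is put on [C]. *)
Definition ccont {K : AbsRing} (f : K -> C) (x : K) : Prop :=
  forall eps : R, (0 < eps)%R -> exists d : R, (0 < d)%R /\
    forall y, (abs (minus y x) < d)%R -> (Cmod (f y - f x) < eps)%R.

Section Ccont.
Context {K : AbsRing}.

Lemma ccont_const (c : C) (x : K) : ccont (fun _ => c) x.
Proof.
  intros eps He. exists 1%R. split; [lra|]. intros y _.
  replace (c - c) with (RtoC 0) by ring. rewrite Cmod_0. lra.
Qed.

Lemma ccont_plus (f g : K -> C) x : ccont f x -> ccont g x -> ccont (fun y => f y + g y) x.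
Proof.
  intros Hf Hg eps He.
  destruct (Hf (eps / 2)%R) as [d1 [Hd1 H1]]; [lra|].
  destruct (Hg (eps / 2)%R) as [d2 [Hd2 H2]]; [lra|].
  exists (Rmin d1 d2). split; [apply Rmin_pos; auto|]. intros y Hy.
  assert (A1 := H1 y (Rlt_le_trans _ _ _ Hy (Rmin_l _ _))).
  assert (A2 := H2 y (Rlt_le_trans _ _ _ Hy (Rmin_r _ _))).
  replace (f y + g y - (f x + g x)) with ((f y - f x) + (g y - g x)) by ring.
  eapply Rle_lt_trans; [apply Cmod_triangle|]. lra.
Qed.

Lemma ccont_opp (f : K -> C) x : ccont f x -> ccont (fun y => - f y) x.
Proof.
  intros Hf eps He. destruct (Hf eps He) as [d [Hd H]]. exists d. split; auto.
  intros y Hy. replace (- f y - - f x) with (- (f y - f x)) by ring. rewrite Cmod_opp. auto.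
Qed.

Lemma ccont_minus (f g : K -> C) x : ccont f x -> ccont g x -> ccont (fun y => f y - g y) x.
Proof. intros Hf Hg. apply (ccont_plus f (fun y => - g y)); auto. apply ccont_opp; auto. Qed.

Lemma ccont_mult (f g : K -> C) x : ccont f x -> ccont g x -> ccont (fun y => f y * g y) x.
Proof.
  intros Hf Hg eps He.
  set (A := Cmod (f x)). set (B := Cmod (g x)).
  assert (HA : (0 <= A)%R) by apply Cmod_ge_0. assert (HB : (0 <= B)%R) by apply Cmod_ge_0.
  set (ef := (eps / (2 * (B + 1)))%R). set (eg := Rmin 1 (eps / (2 * (A + 1)))).
  assert (Hef : (0 < ef)%R) by (apply Rdiv_lt_0_compat; lra).
  assert (Heg : (0 < eg)%R) by (apply Rmin_pos; [lra|apply Rdiv_lt_0_compat; lra]).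
  destruct (Hf ef Hef) as [d1 [Hd1 H1]]. destruct (Hg eg Heg) as [d2 [Hd2 H2]].
  exists (Rmin d1 d2). split; [apply Rmin_pos; auto|]. intros y Hy.
  assert (A1 := H1 y (Rlt_le_trans _ _ _ Hy (Rmin_l _ _))).
  assert (A2 := H2 y (Rlt_le_trans _ _ _ Hy (Rmin_r _ _))).
  assert (Heg1 : (eg <= 1)%R) by apply Rmin_l.
  assert (Heg2 : (eg <= eps / (2 * (A + 1)))%R) by apply Rmin_r.
  assert (Hgy : (Cmod (g y) <= B + 1)%R).
  { replace (g y) with ((g y - g x) + g x) by ring.
    eapply Rle_trans; [apply Cmod_triangle|]. fold B. lra. }
  replace (f y * g y - f x * g x) with ((f y - f x) * g y + f x * (g y - g x)) by ring.
  eapply Rle_lt_trans; [apply Cmod_triangle|]. rewrite !Cmod_mult. fold A.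
  assert (E1 : (Cmod (f y - f x) * Cmod (g y) <= eps / 2)%R).
  { apply Rle_trans with (ef * (B + 1))%R.
    - apply Rmult_le_compat; try apply Cmod_ge_0; lra.
    - unfold ef. right. field. lra. }
  assert (E2 : (A * Cmod (g y - g x) < eps / 2)%R).
  { apply Rle_lt_trans with (A * (eps / (2 * (A + 1))))%R.
    - apply Rmult_le_compat_l; lra.
    - apply (Rmult_lt_reg_r (2 * (A + 1))); [lra|]. unfold Rdiv. field_simplify; lra. }
  lra.
Qed.

Lemma ccont_inv (f : K -> C) x : ccont f x -> f x <> 0 -> ccont (fun y => / f y) x.
Proof.
  intros Hf Hnz eps He. set (A := Cmod (f x)).
  assert (HA : (0 < A)%R) by (apply Cmod_gt_0; auto).
  assert (H1 := Rmin_l (A / 2) (eps * A * A / 2)).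
  assert (H2 := Rmin_r (A / 2) (eps * A * A / 2)).
  destruct (Hf (Rmin (A / 2) (eps * A * A / 2)))%R as [d [Hd H]].
  { apply Rmin_pos; [lra|]. apply Rdiv_lt_0_compat; [|lra]. apply Rmult_lt_0_compat; nra. }
  exists d. split; auto. intros y Hy. specialize (H y Hy).
  assert (Hfy : (A / 2 <= Cmod (f y))%R).
  { assert (T := Cmod_sub_ge (f x) (f y)). rewrite Cmod_sub_sym in T. fold A in T. lra. }
  assert (Hfy0 : f y <> 0) by (intros E; rewrite E, Cmod_0 in Hfy; lra).
  replace (/ f y - / f x) with ((f x - f y) / (f y * f x)) by (field; auto).
  rewrite Cmod_div by (apply Cmult_neq_0; auto). rewrite Cmod_mult, Cmod_sub_sym. fold A.
  apply (Rmult_lt_reg_r (Cmod (f y) * A)); [nra|]. unfold Rdiv.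
  rewrite Rmult_assoc, Rinv_l, Rmult_1_r by nra.
  assert (eps * (A / 2) * A <= eps * Cmod (f y) * A)%R.
  { apply Rmult_le_compat_r; [lra|]. apply Rmult_le_compat_l; lra. }
  lra.
Qed.

Lemma ccont_div (f g : K -> C) x :
  ccont f x -> ccont g x -> g x <> 0 -> ccont (fun y => f y / g y) x.
Proof. intros Hf Hg Hn. apply (ccont_mult f (fun y => / g y)); auto. apply ccont_inv; auto. Qed.

End Ccont.

Lemma ccont_id (x : C) : @ccont C_AbsRing (fun y => y) x.
Proof. intros eps He. exists eps. split; auto. Qed.

Ltac ccont_auto :=
  repeat first [ apply ccont_const | apply ccont_id | apply ccont_plus | apply ccont_minus
               | apply ccont_mult | apply ccont_opp | apply ccont_div | apply ccont_inv ].

Lemma ccont_continuous (f : R -> C) t :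
  @ccont R_AbsRing f t <-> @continuous R_UniformSpace C_R_NormedModule f t.
Proof.
  split.
  - intros Hc P HP. apply (@locally_norm_le_locally R_AbsRing C_R_NormedModule) in HP.
    destruct HP as [eps HP]. destruct (Hc eps (cond_pos eps)) as [d [Hd H]].
    exists (mkposreal d Hd). intros y Hy. apply HP. unfold ball_norm. rewrite norm_C_R. apply H, Hy.
  - intros Hc eps He.
    assert (Hl : @locally C_R_NormedModule (f t) (fun z => (Cmod (z - f t) < eps)%R)).
    { apply (@locally_le_locally_norm R_AbsRing C_R_NormedModule). exists (mkposreal eps He).
      intros z Hz. unfold ball_norm in Hz. rewrite norm_C_R in Hz. exact Hz. }
    destruct (Hc _ Hl) as [d Hd]. exists d. split; [apply cond_pos|]. intros y Hy. apply Hd, Hy.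
Qed.

Lemma continuity_pt_Cmod (f : R -> C) t :
  @ccont R_AbsRing f t -> continuity_pt (fun y => Cmod (f y)) t.
Proof.
  intros Hc eps He. destruct (Hc eps He) as [d [Hd H]]. exists d. split; auto.
  intros y [_ Hy]. simpl in *. unfold R_dist in *.
  eapply Rle_lt_trans; [apply Cmod_Rabs_sub_le|]. apply H, Hy.
Qed.

Lemma is_derive_C_eps (f : C -> C) x l :
  @is_derive C_AbsRing C_NormedModule f x l <->
  (forall eps : R, (0 < eps)%R -> exists d : R, (0 < d)%R /\ forall y, (Cmod (y - x) < d)%R ->
     (Cmod (f y - f x - (y - x) * l) <= eps * Cmod (y - x))%R).
Proof.
  split.
  - intros [_ H] eps He. destruct (H x (fun P HP => HP) (mkposreal eps He)) as [d Hd].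
    exists d. split; [apply cond_pos|]. intros y Hy. exact (Hd y Hy).
  - intros H. split; [apply is_linear_scal_l|].
    intros x' Hx'. apply (@is_filter_lim_locally_unique _ (AbsRing_NormedModule _)) in Hx'. subst x'.
    intros eps. destruct (H eps (cond_pos eps)) as [d [Hd Hy]].
    exists (mkposreal d Hd). intros y Hb. apply Hy, Hb.
Qed.

Lemma is_derive_R_eps (f : R -> C) x l :
  @is_derive R_AbsRing C_R_NormedModule f x l <->
  (forall eps : R, (0 < eps)%R -> exists d : R, (0 < d)%R /\ forall y, (Rabs (y - x) < d)%R ->
     (Cmod (f y - f x - RtoC (y - x) * l) <= eps * Rabs (y - x))%R).
Proof.
  split.
  - intros [_ H] eps He. destruct (H x (fun P HP => HP) (mkposreal eps He)) as [d Hd].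
    exists d. split; [apply cond_pos|]. intros y Hy.
    specialize (Hd y Hy). rewrite scal_C_R, norm_C_R in Hd. exact Hd.
  - intros H. split; [apply is_linear_scal_l|].
    intros x' Hx'. apply (@is_filter_lim_locally_unique _ (AbsRing_NormedModule _)) in Hx'. subst x'.
    intros eps. destruct (H eps (cond_pos eps)) as [d [Hd Hy]].
    exists (mkposreal d Hd). intros y Hb. rewrite scal_C_R, norm_C_R. apply Hy, Hb.
Qed.

Lemma is_derive_C_caratheodory (f phi : C -> C) x :
  @ccont C_AbsRing phi x ->
  (exists d, (0 < d)%R /\ forall y, (Cmod (y - x) < d)%R -> f y - f x = (y - x) * phi y) ->
  @is_derive C_AbsRing C_NormedModule f x (phi x).
Proof.
  intros Hc [d0 [Hd0 He]]. apply is_derive_C_eps. intros eps Heps.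
  destruct (Hc eps Heps) as [d1 [Hd1 H1]]. exists (Rmin d0 d1). split; [apply Rmin_pos; auto|].
  intros y Hy. rewrite He by (eapply Rlt_le_trans; [exact Hy|apply Rmin_l]).
  replace ((y - x) * phi y - (y - x) * phi x) with ((y - x) * (phi y - phi x)) by ring.
  rewrite Cmod_mult, Rmult_comm. apply Rmult_le_compat_r; [apply Cmod_ge_0|].
  left. apply H1. rewrite abs_minus_C. eapply Rlt_le_trans; [exact Hy|apply Rmin_r].
Qed.

Lemma is_derive_R_caratheodory (f phi : R -> C) x :
  @ccont R_AbsRing phi x ->
  (exists d, (0 < d)%R /\ forall y, (Rabs (y - x) < d)%R -> f y - f x = RtoC (y - x) * phi y) ->
  @is_derive R_AbsRing C_R_NormedModule f x (phi x).
Proof.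
  intros Hc [d0 [Hd0 He]]. apply is_derive_R_eps. intros eps Heps.
  destruct (Hc eps Heps) as [d1 [Hd1 H1]]. exists (Rmin d0 d1). split; [apply Rmin_pos; auto|].
  intros y Hy. rewrite He by (eapply Rlt_le_trans; [exact Hy|apply Rmin_l]).
  replace (RtoC (y - x) * phi y - RtoC (y - x) * phi x) with (RtoC (y - x) * (phi y - phi x)) by ring.
  rewrite Cmod_RtoC_mult, Rmult_comm. apply Rmult_le_compat_r; [apply Rabs_pos|].
  left. apply H1. rewrite abs_minus_R. eapply Rlt_le_trans; [exact Hy|apply Rmin_r].
Qed.

Lemma is_derive_R_caratheodory_factor (g : R -> C) t l :
  @is_derive R_AbsRing C_R_NormedModule g t l ->
  exists phi, @ccont R_AbsRing phi t /\ phi t = l /\ forall y, g y - g t = RtoC (y - t) * phi y.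
Proof.
  intros Hd.
  exists (fun y => if Req_EM_T y t then l else (g y - g t) / RtoC (y - t)).
  split; [|split].
  - intros eps He. destruct (proj1 (is_derive_R_eps g t l) Hd (eps / 2)%R) as [d [Hd0 H]]; [lra|].
    exists d. split; auto. intros y Hy. rewrite abs_minus_R in Hy.
    destruct (Req_EM_T t t) as [_|n]; [|congruence].
    destruct (Req_EM_T y t) as [e|n].
    + replace (l - l) with (RtoC 0) by ring. rewrite Cmod_0. lra.
    + assert (Hyt : RtoC (y - t) <> 0) by (apply RtoC_neq0; lra).
      replace ((g y - g t) / RtoC (y - t) - l) with ((g y - g t - RtoC (y - t) * l) / RtoC (y - t))
        by (field; auto).
      rewrite Cmod_div, Cmod_R by auto.
      assert (Hp : (0 < Rabs (y - t))%R) by (apply Rabs_pos_lt; lra).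
      specialize (H y Hy). apply (Rmult_lt_reg_r (Rabs (y - t))); auto.
      unfold Rdiv. rewrite Rmult_assoc, Rinv_l, Rmult_1_r by lra. nra.
  - destruct (Req_EM_T t t); congruence.
  - intros y. destruct (Req_EM_T y t) as [e|n].
    + subst. replace (t - t)%R with 0%R by ring. ring.
    + field. apply RtoC_neq0. lra.
Qed.

Lemma ccont_is_derive_C (f : C -> C) x :
  @ex_derive C_AbsRing C_NormedModule f x -> @ccont C_AbsRing f x.
Proof.
  intros [l Hl] eps He. destruct (proj1 (is_derive_C_eps f x l) Hl 1%R) as [d [Hd H]]; [lra|].
  set (M := (1 + Cmod l)%R). assert (HM : (0 < M)%R) by (assert (T := Cmod_ge_0 l); unfold M; lra).
  exists (Rmin d (eps / M)). split; [apply Rmin_pos; auto; apply Rdiv_lt_0_compat; auto|].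
  intros y Hy. rewrite abs_minus_C in Hy.
  assert (Hy1 : (Cmod (y - x) < d)%R) by (eapply Rlt_le_trans; [exact Hy|apply Rmin_l]).
  assert (Hy2 : (Cmod (y - x) * M < eps)%R).
  { apply (Rmult_lt_reg_r (/ M)); [apply Rinv_0_lt_compat; lra|].
    rewrite Rmult_assoc, Rinv_r, Rmult_1_r by lra.
    eapply Rlt_le_trans; [exact Hy|apply Rmin_r]. }
  specialize (H y Hy1).
  replace (f y - f x) with ((f y - f x - (y - x) * l) + (y - x) * l) by ring.
  eapply Rle_lt_trans; [apply Cmod_triangle|]. rewrite Cmod_mult. unfold M in Hy2. lra.
Qed.

Lemma ccont_is_derive_R (f : R -> C) x l :
  @is_derive R_AbsRing C_R_NormedModule f x l -> @ccont R_AbsRing f x.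
Proof.
  intros Hl eps He. destruct (proj1 (is_derive_R_eps f x l) Hl 1%R) as [d [Hd H]]; [lra|].
  set (M := (1 + Cmod l)%R). assert (HM : (0 < M)%R) by (assert (T := Cmod_ge_0 l); unfold M; lra).
  exists (Rmin d (eps / M)). split; [apply Rmin_pos; auto; apply Rdiv_lt_0_compat; auto|].
  intros y Hy. rewrite abs_minus_R in Hy.
  assert (Hy1 : (Rabs (y - x) < d)%R) by (eapply Rlt_le_trans; [exact Hy|apply Rmin_l]).
  assert (Hy2 : (Rabs (y - x) * M < eps)%R).
  { apply (Rmult_lt_reg_r (/ M)); [apply Rinv_0_lt_compat; lra|].
    rewrite Rmult_assoc, Rinv_r, Rmult_1_r by lra.
    eapply Rlt_le_trans; [exact Hy|apply Rmin_r]. }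
  specialize (H y Hy1).
  replace (f y - f x) with ((f y - f x - RtoC (y - x) * l) + RtoC (y - x) * l) by ring.
  eapply Rle_lt_trans; [apply Cmod_triangle|]. rewrite Cmod_RtoC_mult. unfold M in Hy2. lra.
Qed.

Definition ccont_within (F : R -> C) (a b t : R) : Prop :=
  forall eps : R, (0 < eps)%R -> exists d : R, (0 < d)%R /\
    forall y, (a <= y <= b)%R -> (Rabs (y - t) < d)%R -> (Cmod (F y - F t) < eps)%R.

Lemma ccont_within_filterlim (F : R -> C) a b t :
  filterlim F (within (fun t' => (a <= t' <= b)%R) (locally t)) (locally (F t)) ->
  ccont_within F a b t.
Proof.
  intros Hc eps He.
  assert (Hl : @locally C_R_NormedModule (F t) (fun z => (Cmod (z - F t) < eps)%R)).
  { apply (@locally_le_locally_norm R_AbsRing C_R_NormedModule). exists (mkposreal eps He).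
    intros z Hz. unfold ball_norm in Hz. rewrite norm_C_R in Hz. exact Hz. }
  destruct (Hc _ Hl) as [d Hd]. exists d. split; [apply cond_pos|].
  intros y Hy1 Hy2. apply Hd; auto.
Qed.

Lemma ccont_within_ccont (F : R -> C) a b t : @ccont R_AbsRing F t -> ccont_within F a b t.
Proof. intros Hc eps He. destruct (Hc eps He) as [d [Hd H]]. exists d. split; auto. Qed.

Lemma ccont_within_interior (F : R -> C) a b t :
  (a < t < b)%R -> ccont_within F a b t -> @ccont R_AbsRing F t.
Proof.
  intros Ht Hw eps He. destruct (Hw eps He) as [d [Hd H]].
  exists (Rmin d (Rmin (t - a) (b - t))). split; [repeat apply Rmin_pos; lra|].
  intros y Hy. rewrite abs_minus_R in Hy.
  assert (T1 := Rmin_l d (Rmin (t - a) (b - t))). assert (T2 := Rmin_r d (Rmin (t - a) (b - t))).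
  assert (T3 := Rmin_l (t - a) (b - t)). assert (T4 := Rmin_r (t - a) (b - t)).
  apply Rabs_def2 in Hy. apply H; [lra|]. apply Rabs_def1; lra.
Qed.

(* Precomposing with [clamp a b] turns a function continuous on [a, b] into one continuous
   everywhere, to which Coquelicot's integrability lemmas apply. *)
Definition clamp (a b y : R) : R := Rmax a (Rmin y b).

Lemma clamp_in a b y : (a <= b)%R -> (a <= clamp a b y <= b)%R.
Proof. intros H. unfold clamp, Rmax, Rmin. repeat destruct Rle_dec; lra. Qed.

Lemma clamp_id a b y : (a <= y <= b)%R -> clamp a b y = y.
Proof. intros H. unfold clamp, Rmax, Rmin. repeat destruct Rle_dec; lra. Qed.

Lemma clamp_lipschitz a b y t : (a <= b)%R -> (Rabs (clamp a b y - clamp a b t) <= Rabs (y - t))%R.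
Proof.
  intros H. unfold clamp, Rmax, Rmin.
  repeat destruct Rle_dec; unfold Rabs; repeat destruct Rcase_abs; lra.
Qed.

Lemma ccont_clamp (F : R -> C) a b t :
  (a <= b)%R -> (forall z, (a <= z <= b)%R -> ccont_within F a b z) ->
  @ccont R_AbsRing (fun y => F (clamp a b y)) t.
Proof.
  intros Hab Hw eps He.
  destruct (Hw (clamp a b t) (clamp_in a b t Hab) eps He) as [d [Hd H]].
  exists d. split; auto. intros y Hy. rewrite abs_minus_R in Hy.
  apply H; [apply clamp_in; lra|]. assert (T := clamp_lipschitz a b y t Hab). lra.
Qed.

Lemma ex_RInt_clamp (h : R -> C) a b :
  (a <= b)%R -> (forall t, @ccont R_AbsRing (fun y => h (clamp a b y)) t) ->
  @ex_RInt C_R_NormedModule h a b.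
Proof.
  intros Hab Hc. apply (@ex_RInt_ext C_R_NormedModule (fun y => h (clamp a b y))).
  - intros x Hx. rewrite Rmin_left, Rmax_right in Hx by lra. rewrite clamp_id; auto. lra.
  - apply (@ex_RInt_continuous C_R_CompleteNormedModule). intros z _.
    apply ccont_continuous, Hc.
Qed.

Notation RIntC := (@RInt C_R_CompleteNormedModule).

Lemma is_RInt_Cmult_l (f : R -> C) a b (l c : C) :
  @is_RInt C_R_NormedModule f a b l -> @is_RInt C_R_NormedModule (fun t => c * f t) a b (c * l).
Proof.
  intros H.
  assert (H1 := @is_RInt_fct_extend_fst R_NormedModule R_NormedModule f a b l H).
  assert (H2 := @is_RInt_fct_extend_snd R_NormedModule R_NormedModule f a b l H).
  destruct c as [cr ci]. destruct l as [lr li]. simpl in H1, H2.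
  assert (A1 := @is_RInt_minus R_NormedModule _ _ a b _ _
                  (is_RInt_scal _ a b cr _ H1) (is_RInt_scal _ a b ci _ H2)).
  assert (A2 := @is_RInt_plus R_NormedModule _ _ a b _ _
                  (is_RInt_scal _ a b cr _ H2) (is_RInt_scal _ a b ci _ H1)).
  set (g := fun t => ((cr * fst (f t) - ci * snd (f t))%R, (cr * snd (f t) + ci * fst (f t))%R)).
  eapply is_RInt_ext; [|exact (@is_RInt_fct_extend_pair R_NormedModule R_NormedModule g a b _ _ A1 A2)].
  intros t _. reflexivity.
Qed.

Lemma Cminus_eq0 (x y : C) : x - y = 0 -> x = y.
Proof. intros H. replace x with (x - y + y) by ring. rewrite H. ring. Qed.

Lemma Cmod_lt_all_eq0 (z : C) : (forall e, (0 < e)%R -> (Cmod z < e)%R) -> z = 0.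
Proof.
  intros H. apply Cmod_eq_0. destruct (Cmod_ge_0 z) as [Hp|Hz]; auto.
  specialize (H _ Hp). lra.
Qed.

(* The fundamental theorem of calculus with [F] differentiable only on the open interval: the
   integral over [x, y] with a < x < y < b tends to both sides of the identity. *)
Lemma is_RInt_derive_interior (F f : R -> C) a b : (a < b)%R ->
  (forall t, @ccont R_AbsRing F t) -> (forall t, @ccont R_AbsRing f t) ->
  (forall t, (a < t < b)%R -> @is_derive R_AbsRing C_R_NormedModule F t (f t)) ->
  @is_RInt C_R_NormedModule f a b (F b - F a).
Proof.
  intros Hab HF Hf Hder.
  assert (Hex : forall x y, ex_RInt f x y).
  { intros x y. apply (@ex_RInt_continuous C_R_CompleteNormedModule). intros z _.
    apply ccont_continuous, Hf. }
  replace (F b - F a) with (RIntC f a b); [exact (@RInt_correct C_R_CompleteNormedModule f a b (Hex a b))|].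
  assert (Hc : @continuous (prod_UniformSpace R_UniformSpace R_UniformSpace) C_R_NormedModule
                 (fun z : R * R => RIntC f (fst z) (snd z)) (a, b)).
  { apply (continuous_RInt f a b (fun x y => RIntC f x y)). apply filter_forall. intros z.
    apply (@RInt_correct C_R_CompleteNormedModule), Hex. }
  apply Cminus_eq0, Cmod_lt_all_eq0.
  intros e He. assert (He3 : (0 < e / 3)%R) by lra.
  assert (Hl : @locally C_R_NormedModule (RIntC f a b) (fun z => (Cmod (z - RIntC f a b) < e / 3)%R)).
  { apply (@locally_le_locally_norm R_AbsRing C_R_NormedModule). exists (mkposreal _ He3).
    intros z Hz. unfold ball_norm in Hz. rewrite norm_C_R in Hz. exact Hz. }
  destruct (Hc _ Hl) as [d1 Hd1].
  destruct (HF a _ He3) as [d2 [Hd2 H2]]. destruct (HF b _ He3) as [d3 [Hd3 H3]].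
  set (d := Rmin (Rmin d1 d2) (Rmin d3 (b - a))).
  assert (Hd : (0 < d)%R) by (unfold d; repeat apply Rmin_pos; try lra; apply cond_pos).
  assert (Hdd1 : (d <= d1)%R) by (unfold d; eapply Rle_trans; [apply Rmin_l|apply Rmin_l]).
  assert (Hdd2 : (d <= d2)%R) by (unfold d; eapply Rle_trans; [apply Rmin_l|apply Rmin_r]).
  assert (Hdd3 : (d <= d3)%R) by (unfold d; eapply Rle_trans; [apply Rmin_r|apply Rmin_l]).
  assert (Hdd4 : (d <= b - a)%R) by (unfold d; eapply Rle_trans; [apply Rmin_r|apply Rmin_r]).
  set (x := (a + d / 4)%R). set (y := (b - d / 4)%R).
  assert (Hxy : is_RInt f x y (F y - F x)).
  { apply (@is_RInt_derive C_R_CompleteNormedModule F f x y).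
    - intros z Hz. apply Hder. unfold x, y in *. rewrite Rmin_left, Rmax_right in Hz by lra. lra.
    - intros z _. apply ccont_continuous, Hf. }
  assert (E1 : (Cmod (RIntC f x y - RIntC f a b) < e / 3)%R).
  { apply (Hd1 (x, y)). split; simpl.
    - change (Rabs (x - a) < d1)%R. unfold x. rewrite Rabs_right; lra.
    - change (Rabs (y - b) < d1)%R. unfold y. rewrite Rabs_left; lra. }
  assert (E2 : (Cmod (F x - F a) < e / 3)%R).
  { apply H2. rewrite abs_minus_R. unfold x. rewrite Rabs_right; lra. }
  assert (E3 : (Cmod (F y - F b) < e / 3)%R).
  { apply H3. rewrite abs_minus_R. unfold y. rewrite Rabs_left; lra. }
  rewrite (@is_RInt_unique C_R_CompleteNormedModule _ _ _ _ Hxy) in E1.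
  replace (RIntC f a b - (F b - F a)) with (- (F y - F x - RIntC f a b) + (F y - F b) - (F x - F a))
    by ring.
  eapply Rle_lt_trans; [apply Cmod_sub_le|].
  eapply Rle_lt_trans; [apply Rplus_le_compat_r, Cmod_triangle|]. rewrite Cmod_opp. lra.
Qed.

(* Divided differences: [fcub v s - fcub u s = (v - u) * fcub_slope v u], and likewise for [Pp]. *)
Definition fcub_slope (v u : C) : C := (v * v + v * u + u * u) / RtoC 3 + v + u.

Definition Pp_slope (v u s : C) : C := RtoC 2 / RtoC 15 *
  (- (v * v * v + v * v * u + v * u * u + u * u * u) - RtoC 4 * (v * v + v * u + u * u)
   + RtoC 3 * (v + u) + RtoC 18 + RtoC 6 * s).

(* [Rv], [Ru] stand for the values of the branch of [sqrt (fcub _ s)] at [v] and [u]. *)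
Definition Q_slope (v u s Rv Ru : C) : C :=
  rho s * (Pp_slope v u s * Ru - Pp u s * fcub_slope v u / (Rv + Ru)) / (Rv * Ru).

Lemma fcub_sub v u s : fcub v s - fcub u s = (v - u) * fcub_slope v u.
Proof. unfold fcub, fcub_slope. field. Qed.

Lemma fcub_sub_param v s z : fcub v z - fcub v s = z - s.
Proof. unfold fcub. ring. Qed.

Lemma Pp_sub v u s : Pp v s - Pp u s = (v - u) * Pp_slope v u s.
Proof. unfold Pp, Pp_slope. field. Qed.

Lemma Q_sub v u s Rv Ru :
  Rv * Rv = fcub v s -> Ru * Ru = fcub u s -> Rv <> 0 -> Ru <> 0 -> Rv + Ru <> 0 ->
  rho s * Pp v s / Rv - rho s * Pp u s / Ru = (v - u) * Q_slope v u s Rv Ru.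
Proof.
  intros Hv Hu Hv0 Hu0 Hvu.
  assert (HP : Pp v s = Pp u s + (v - u) * Pp_slope v u s) by (rewrite <- Pp_sub; ring).
  assert (HR : (v - u) * fcub_slope v u = (Rv - Ru) * (Rv + Ru)).
  { rewrite <- (fcub_sub v u s), <- Hv, <- Hu. ring. }
  unfold Q_slope.
  replace ((v - u) * (rho s * (Pp_slope v u s * Ru - Pp u s * fcub_slope v u / (Rv + Ru)) / (Rv * Ru)))
    with (rho s * ((v - u) * Pp_slope v u s * Ru - Pp u s * ((v - u) * fcub_slope v u) / (Rv + Ru))
          / (Rv * Ru)) by (field; auto).
  rewrite HR, HP. field. auto.
Qed.

Lemma three_s_plus_four_neq0 (s : C) : s <> RtoC (-4/3) -> RtoC 3 * s + RtoC 4 <> 0.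
Proof.
  intros Hs E. apply Hs.
  replace s with ((RtoC 3 * s + RtoC 4 - RtoC 4) / RtoC 3) by (field; apply RtoC_neq0; lra).
  rewrite E, <- RtoC_minus, <- RtoC_div by lra. f_equal. lra.
Qed.

(* On the diagonal the slope is [1 / R^3 - rho R]: this is the identity
   [rho (P' R^2 - P (u^2 + 2u) / 2) = 1 - rho R^4] with [R^2 = fcub u s]. *)
Lemma Q_slope_diag u s R0 :
  R0 * R0 = fcub u s -> R0 <> 0 -> s <> 0 -> s <> RtoC (-4/3) ->
  Q_slope u u s R0 R0 = RtoC 1 / (R0 * R0 * R0) - rho s * R0.
Proof.
  intros Hsq H0 Hs1 Hs2. assert (H5 := three_s_plus_four_neq0 s Hs2).
  assert (H2 : RtoC 2 <> 0) by (apply RtoC_neq0; lra).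
  assert (H3 : RtoC 3 <> 0) by (apply RtoC_neq0; lra).
  unfold Q_slope. replace (R0 + R0) with (RtoC 2 * R0) by ring.
  transitivity (rho s * (Pp_slope u u s * (R0 * R0) - Pp u s * fcub_slope u u / RtoC 2)
                / (R0 * R0 * R0)); [field; auto|].
  transitivity ((RtoC 1 - rho s * (R0 * R0) * (R0 * R0)) / (R0 * R0 * R0)); [|field; auto].
  f_equal. rewrite Hsq. unfold rho, Pp_slope, Pp, fcub_slope, fcub. field. auto.
Qed.

Lemma neq0_of_Cmod_sub_lt (x y : C) : (Cmod (x - y) < Cmod y)%R -> x <> 0 /\ x + y <> 0.
Proof.
  intros H. split; intros E.
  - rewrite E in H. replace (0 - y) with (- y) in H by ring. rewrite Cmod_opp in H. lra.
  - replace (x - y) with (- (RtoC 2 * y)) in H by (replace x with (x + y - y) by ring; rewrite E; ring).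
    rewrite Cmod_opp, Cmod_double in H. assert (T := Cmod_ge_0 y). lra.
Qed.

Lemma locally_C_ball (u : C) (P : C -> Prop) :
  locally u P -> exists d, (0 < d)%R /\ forall v, (Cmod (v - u) < d)%R -> P v.
Proof.
  intros H. destruct (@locally_norm_le_locally C_AbsRing C_NormedModule u P H) as [d Hd].
  exists d. split; [apply cond_pos|]. intros v Hv. apply Hd, Hv.
Qed.

Lemma is_derive_Q (s u : C) (Rb : C -> C) :
  s <> RtoC 0 -> s <> RtoC (-4/3) -> Rb u <> RtoC 0 ->
  @ex_derive C_AbsRing C_NormedModule Rb u ->
  locally u (fun v => Rb v * Rb v = fcub v s) ->
  @is_derive C_AbsRing C_NormedModule (fun v => rho s * Pp v s / Rb v) u
    (RtoC 1 / (Rb u * Rb u * Rb u) - rho s * Rb u).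
Proof.
  intros Hs1 Hs2 Hu Hd Hl. apply locally_C_ball in Hl. destruct Hl as [d0 [Hd0 Hl]].
  assert (Hc := ccont_is_derive_C Rb u Hd).
  assert (Hsq : Rb u * Rb u = fcub u s).
  { apply Hl. replace (u - u) with (RtoC 0) by ring. rewrite Cmod_0. auto. }
  rewrite <- (Q_slope_diag u s (Rb u) Hsq Hu Hs1 Hs2).
  apply (is_derive_C_caratheodory _ (fun v => Q_slope v u s (Rb v) (Rb u))).
  - assert (Huu : Rb u + Rb u <> 0).
    { replace (Rb u + Rb u) with (RtoC 2 * Rb u) by ring.
      apply Cmult_neq_0; auto. apply RtoC_neq0. lra. }
    unfold Q_slope, Pp_slope, fcub_slope. ccont_auto; auto.
    all: try (apply Cmult_neq_0; auto). all: apply RtoC_neq0; lra.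
  - destruct (Hc (Cmod (Rb u))) as [d1 [Hd1 H1]]; [apply Cmod_gt_0; auto|].
    exists (Rmin d0 d1). split; [apply Rmin_pos; auto|]. intros v Hv.
    assert (Hv0 : (Cmod (v - u) < d0)%R) by (eapply Rlt_le_trans; [exact Hv|apply Rmin_l]).
    assert (Hv1 : (Cmod (v - u) < d1)%R) by (eapply Rlt_le_trans; [exact Hv|apply Rmin_r]).
    destruct (neq0_of_Cmod_sub_lt (Rb v) (Rb u) (H1 v Hv1)) as [N1 N2].
    apply Q_sub; auto.
Qed.

(* The same factorisation along a curve [g]: the branch [Bt] need only be continuous in [t]. *)
Lemma is_derive_Q_along (g Bt : R -> C) (dg s : C) (a b t : R) :
  (a < t < b)%R -> @is_derive R_AbsRing C_R_NormedModule g t dg -> ccont_within Bt a b t ->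
  (forall y, (a <= y <= b)%R -> Bt y * Bt y = fcub (g y) s /\ Bt y <> 0) ->
  s <> RtoC 0 -> s <> RtoC (-4/3) ->
  @is_derive R_AbsRing C_R_NormedModule (fun y => rho s * Pp (g y) s / Bt y) t
     ((RtoC 1 / (Bt t * Bt t * Bt t) - rho s * Bt t) * dg).
Proof.
  intros Ht Hd Hw HB Hs1 Hs2.
  destruct (is_derive_R_caratheodory_factor g t dg Hd) as [phg [Hpc [Hpt Heq]]].
  assert (HcB := ccont_within_interior Bt a b t Ht Hw).
  assert (Hcg := ccont_is_derive_R g t dg Hd).
  destruct (HB t) as [Hsq Hnz]; [lra|].
  replace ((RtoC 1 / (Bt t * Bt t * Bt t) - rho s * Bt t) * dg)
    with (phg t * Q_slope (g t) (g t) s (Bt t) (Bt t))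
    by (rewrite (Q_slope_diag (g t) s (Bt t) Hsq Hnz Hs1 Hs2), Hpt; ring).
  apply (is_derive_R_caratheodory _ (fun y => phg y * Q_slope (g y) (g t) s (Bt y) (Bt t))).
  - assert (Htt : Bt t + Bt t <> 0).
    { replace (Bt t + Bt t) with (RtoC 2 * Bt t) by ring.
      apply Cmult_neq_0; auto. apply RtoC_neq0. lra. }
    unfold Q_slope, Pp_slope, fcub_slope. ccont_auto; auto.
    all: try (apply Cmult_neq_0; auto). all: apply RtoC_neq0; lra.
  - destruct (HcB (Cmod (Bt t))) as [d1 [Hd1 H1]]; [apply Cmod_gt_0; auto|].
    exists (Rmin d1 (Rmin (t - a) (b - t))). split; [repeat apply Rmin_pos; lra|]. intros y Hy.
    assert (T1 := Rmin_l d1 (Rmin (t - a) (b - t))). assert (T2 := Rmin_r d1 (Rmin (t - a) (b - t))).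
    assert (T3 := Rmin_l (t - a) (b - t)). assert (T4 := Rmin_r (t - a) (b - t)).
    assert (Hy' := Hy). apply Rabs_def2 in Hy'.
    destruct (HB y) as [Hsqy Hnzy]; [lra|].
    destruct (neq0_of_Cmod_sub_lt (Bt y) (Bt t)) as [N1 N2]; [apply H1; rewrite abs_minus_R; lra|].
    rewrite (Q_sub (g y) (g t) s (Bt y) (Bt t)); auto. rewrite Heq. ring.
Qed.

Lemma Cmod_sub_add_ge (x b : C) : (2 * Cmod b <= Cmod (x - b) + Cmod (x + b))%R.
Proof.
  rewrite <- Cmod_double. replace (RtoC 2 * b) with ((x + b) - (x - b)) by ring.
  eapply Rle_trans; [apply Cmod_sub_le|lra].
Qed.

Lemma sqrt_branch_separated (x b k : C) :
  x * x = b * b + k -> (Cmod k < Cmod b * Cmod b)%R -> Cmod (x - b) <> Cmod (x + b).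
Proof.
  intros Hsq Hk E.
  assert (Hprod : (Cmod (x - b) * Cmod (x + b) = Cmod k)%R).
  { rewrite <- Cmod_mult. f_equal. replace k with (x * x - b * b) by (rewrite Hsq; ring). ring. }
  assert (T1 := Cmod_sub_add_ge x b). assert (T2 := Cmod_ge_0 b).
  rewrite E in Hprod, T1. nra.
Qed.

Lemma ccont_segment (beta : C -> C) (s h : C) (l : R) :
  @ccont C_AbsRing beta (s + RtoC l * h) -> @ccont R_AbsRing (fun l' => beta (s + RtoC l' * h)) l.
Proof.
  intros Hc eps He. destruct (Hc eps He) as [d [Hd H]].
  assert (Th := Cmod_ge_0 h).
  exists (d / (Cmod h + 1))%R. split; [apply Rdiv_lt_0_compat; lra|].
  intros y Hy. rewrite abs_minus_R in Hy. apply H. rewrite abs_minus_C.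
  replace (s + RtoC y * h - (s + RtoC l * h)) with (RtoC (y - l) * h) by (rewrite RtoC_minus; ring).
  rewrite Cmod_RtoC_mult.
  apply (Rmult_lt_compat_r (Cmod h + 1)) in Hy; [|lra]. unfold Rdiv in Hy.
  rewrite Rmult_assoc, Rinv_l, Rmult_1_r in Hy by lra.
  assert (T := Rabs_pos (y - l)). nra.
Qed.

(* A continuous branch [beta] of [z |-> sqrt (beta s ^ 2 + (z - s))] stays the square root nearer
   to [beta s]: along the segment from [s] to [s + h] the sign of [|beta - beta s| - |beta + beta s|]
   cannot change, by [sqrt_branch_separated] and the intermediate value theorem. *)
Lemma branch_stays_near (beta : C -> C) (s : C) (r m : R) (h : C) :
  (0 < m)%R -> (m <= Cmod (beta s))%R ->
  (forall z : C, (Cmod (z - s) < r)%R ->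
     beta z * beta z = beta s * beta s + (z - s) /\ @ccont C_AbsRing beta z) ->
  (Cmod h < r)%R -> (Cmod h < m * m)%R ->
  (Cmod (beta (s + h)%C - beta s) < Cmod (beta (s + h)%C + beta s))%R.
Proof.
  intros Hm Hmb Hz Hhr Hhm. assert (Th := Cmod_ge_0 h).
  set (phi := fun l : R =>
    (Cmod (beta (s + RtoC l * h)%C - beta s) - Cmod (beta (s + RtoC l * h)%C + beta s))%R).
  assert (Hin : forall l, (0 <= l <= 1)%R -> (Cmod (s + RtoC l * h - s) < r)%R).
  { intros l Hl. replace (s + RtoC l * h - s) with (RtoC l * h) by ring.
    rewrite Cmod_RtoC_mult, Rabs_right by lra. nra. }
  assert (Hphi0 : forall l, (0 <= l <= 1)%R -> phi l <> 0%R).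
  { intros l Hl E. destruct (Hz _ (Hin l Hl)) as [Hsq _].
    replace (s + RtoC l * h - s) with (RtoC l * h) in Hsq by ring.
    apply (sqrt_branch_separated _ _ _ Hsq); [|unfold phi in E; lra].
    rewrite Cmod_RtoC_mult, Rabs_right by lra. nra. }
  assert (Hcont : forall l, (0 <= l <= 1)%R -> continuity_pt phi l).
  { intros l Hl. destruct (Hz _ (Hin l Hl)) as [_ Hc].
    replace (s + RtoC l * h - s + s) with (s + RtoC l * h) in Hc by ring.
    apply ccont_segment in Hc.
    apply continuity_pt_minus; apply continuity_pt_Cmod; ccont_auto; auto. }
  assert (Hstart : (phi 0 < 0)%R).
  { unfold phi. replace (s + RtoC 0 * h) with s by ring.
    replace (beta s - beta s) with (RtoC 0) by ring. replace (beta s + beta s) with (RtoC 2 * beta s) by ring.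
    rewrite Cmod_0, Cmod_double. lra. }
  destruct (Rlt_le_dec (phi 1) 0) as [Hn|[Hp|Hp]].
  - unfold phi in Hn. replace (s + RtoC 1 * h) with (s + h) in Hn by ring. lra.
  - destruct (IVT_interv phi 0 1 Hcont) as [z [Hz1 Hz2]]; try lra. exfalso. exact (Hphi0 z Hz1 Hz2).
  - exfalso. apply (Hphi0 1); [lra|]. auto.
Qed.

Lemma branch_near_bound (x b h : C) (m : R) :
  (0 < m)%R -> (m <= Cmod b)%R -> x * x = b * b + h ->
  (Cmod (x - b) < Cmod (x + b))%R -> (Cmod h <= m * m / 2)%R ->
  (Cmod (x - b) <= Cmod h / m)%R /\ (m / 2 <= Cmod x)%R.
Proof.
  intros Hm Hb Hsq Hlt Hh.
  assert (Hprod : (Cmod (x - b) * Cmod (x + b) = Cmod h)%R).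
  { rewrite <- Cmod_mult. f_equal. replace h with (x * x - b * b) by (rewrite Hsq; ring). ring. }
  assert (T1 := Cmod_sub_add_ge x b). assert (T2 := Cmod_ge_0 (x - b)).
  assert (Hd : (Cmod (x - b) * m <= Cmod h)%R) by nra.
  split.
  - apply (Rmult_le_reg_r m); auto. unfold Rdiv. rewrite Rmult_assoc, Rinv_l, Rmult_1_r by lra. lra.
  - assert (T3 := Cmod_sub_ge b (b - x)). replace (b - (b - x)) with x in T3 by ring.
    rewrite Cmod_sub_sym in T3. nra.
Qed.

Lemma Rdiv_le_compat (a a' p q : R) :
  (0 <= a)%R -> (a <= a')%R -> (0 < q)%R -> (q <= p)%R -> (a / p <= a' / q)%R.
Proof.
  intros Ha Haa Hq Hp. unfold Rdiv. apply Rmult_le_compat; auto.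
  - left. apply Rinv_0_lt_compat. lra.
  - apply Rinv_le_contravar; auto.
Qed.

(* Second-order Taylor remainders of [sqrt] and [1 / sqrt] at [b ^ 2], for the nearer root [x]. *)
Lemma branch_remainder_bound (x b h : C) (m : R) :
  (0 < m)%R -> (m <= Cmod b)%R -> x * x = b * b + h ->
  (Cmod (x - b) < Cmod (x + b))%R -> (Cmod h <= m * m / 2)%R ->
  (Cmod (x - b - h / (RtoC 2 * b)) <= / (m * m * m) * (Cmod h * Cmod h))%R.
Proof.
  intros Hm Hb Hsq Hlt Hh. destruct (branch_near_bound x b h m Hm Hb Hsq Hlt Hh) as [Hd _].
  assert (Hb0 : b <> 0) by (apply Cmod_gt_0; lra).
  replace (x - b - h / (RtoC 2 * b)) with (- ((x - b) * (x - b)) / (RtoC 2 * b)).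
  2:{ replace h with (x * x - b * b) by (rewrite Hsq; ring).
       field; repeat split; auto; apply RtoC_neq0; lra. }
  rewrite Cmod_div, Cmod_opp, Cmod_mult, Cmod_double by (apply Cmult_neq_0; auto; apply RtoC_neq0; lra).
  assert (T := Cmod_ge_0 (x - b)). assert (Th := Cmod_ge_0 h).
  eapply Rle_trans.
  - apply (Rdiv_le_compat _ ((Cmod h / m) * (Cmod h / m)) _ (2 * m)); nra.
  - replace (Cmod h / m * (Cmod h / m) / (2 * m))%R with (/ (m * m * m) * (Cmod h * Cmod h) / 2)%R
      by (field; lra).
    assert (0 <= / (m * m * m) * (Cmod h * Cmod h))%R.
    { apply Rmult_le_pos; [left; apply Rinv_0_lt_compat; repeat apply Rmult_lt_0_compat|]; nra. }
    lra.
Qed.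

Lemma inv_branch_remainder_bound (x b h : C) (m M : R) :
  (0 < m)%R -> (m <= Cmod b)%R -> (Cmod b <= M)%R -> x * x = b * b + h ->
  (Cmod (x - b) < Cmod (x + b))%R -> (Cmod h <= m * m / 2)%R ->
  (Cmod (RtoC 1 / x - RtoC 1 / b + h / (RtoC 2 * (b * b * b)))
     <= (m + 3 * M) * / (m * m * m * m * m * m) * (Cmod h * Cmod h))%R.
Proof.
  intros Hm Hb HM Hsq Hlt Hh. destruct (branch_near_bound x b h m Hm Hb Hsq Hlt Hh) as [Hd Hx].
  assert (Hb0 : b <> 0) by (apply Cmod_gt_0; lra).
  assert (Hx0 : x <> 0) by (apply Cmod_gt_0; lra).
  assert (H2 : RtoC 2 <> 0) by (apply RtoC_neq0; lra).
  replace (RtoC 1 / x - RtoC 1 / b + h / (RtoC 2 * (b * b * b)))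
    with ((x - b) * (x - b) * ((x - b) + RtoC 3 * b) / (RtoC 2 * x * (b * b * b))).
  2:{ replace h with (x * x - b * b) by (rewrite Hsq; ring). field. auto. }
  rewrite Cmod_div by (repeat apply Cmult_neq_0; auto).
  rewrite !Cmod_mult, Cmod_R, Rabs_right by lra.
  assert (T := Cmod_ge_0 (x - b)). assert (Th := Cmod_ge_0 h).
  assert (Hd2 : (Cmod (x - b) <= m / 2)%R).
  { eapply Rle_trans; [exact Hd|]. apply (Rmult_le_reg_r m); auto. unfold Rdiv.
    rewrite Rmult_assoc, Rinv_l, Rmult_1_r by lra. nra. }
  assert (Hnum : (Cmod (x - b + RtoC 3 * b) <= m + 3 * M)%R).
  { eapply Rle_trans; [apply Cmod_triangle|].
    rewrite Cmod_RtoC_mult, Rabs_right by lra. lra. }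
  eapply Rle_trans.
  - apply (Rdiv_le_compat _ ((Cmod h / m) * (Cmod h / m) * (m + 3 * M)) _ (m * m * m * m)).
    + assert (T' := Cmod_ge_0 (x - b + RtoC 3 * b)). nra.
    + apply Rmult_le_compat; auto; [nra|apply Cmod_ge_0|]. apply Rmult_le_compat; auto.
    + repeat apply Rmult_lt_0_compat; lra.
    + assert (Hb2 : (m * m * m <= Cmod b * (Cmod b * Cmod b))%R).
      { assert (m * m <= Cmod b * Cmod b)%R by nra. nra. }
      apply Rle_trans with (2 * (m / 2) * (m * m * m))%R; [right; field|].
      apply Rmult_le_compat; nra.
  - right. field. lra.
Qed.

Lemma is_derive_RInt_param (f : C -> R -> C) (df : R -> C) (a b : R) (s : C) (r K : R) :
  (a <= b)%R -> (0 < r)%R -> (0 <= K)%R ->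
  (forall y : C, (Cmod (y - s) < r)%R -> ex_RInt (f y) a b) ->
  ex_RInt df a b ->
  (forall (y : C) (t : R), (Cmod (y - s) < r)%R -> (a <= t <= b)%R ->
     (Cmod (f y t - f s t - (y - s) * df t) <= K * (Cmod (y - s) * Cmod (y - s)))%R) ->
  @is_derive C_AbsRing C_NormedModule (fun y => RIntC (f y) a b) s (RIntC df a b).
Proof.
  intros Hab Hr HK Hex Hexd Hb. apply is_derive_C_eps. intros eps He.
  set (K' := ((b - a) * K + 1)%R). assert (HK' : (0 < K')%R) by (unfold K'; nra).
  exists (Rmin r (eps / K')). split; [apply Rmin_pos; auto; apply Rdiv_lt_0_compat; auto|].
  intros y Hy.
  assert (Hy1 : (Cmod (y - s) < r)%R) by (eapply Rlt_le_trans; [exact Hy|apply Rmin_l]).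
  assert (Hy2 : (K' * Cmod (y - s) < eps)%R).
  { apply (Rmult_lt_reg_r (/ K')); [apply Rinv_0_lt_compat; lra|].
    replace (K' * Cmod (y - s) * / K')%R with (Cmod (y - s)) by (field; lra).
    eapply Rlt_le_trans; [exact Hy|apply Rmin_r]. }
  assert (Hs0 : (Cmod (s - s) < r)%R) by (replace (s - s) with (RtoC 0) by ring; rewrite Cmod_0; auto).
  set (H := Cmod (y - s)) in *. assert (HH := Cmod_ge_0 (y - s)). fold H in HH.
  assert (I := @is_RInt_minus C_R_NormedModule _ _ _ _ _ _
    (@is_RInt_minus C_R_NormedModule _ _ _ _ _ _
       (@RInt_correct C_R_CompleteNormedModule _ _ _ (Hex y Hy1))
       (@RInt_correct C_R_CompleteNormedModule _ _ _ (Hex s Hs0)))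
    (is_RInt_Cmult_l _ _ _ _ (y - s) (@RInt_correct C_R_CompleteNormedModule _ _ _ Hexd))).
  assert (Hbd : forall t, (a <= t <= b)%R ->
    (@norm R_AbsRing C_R_NormedModule
       (minus (minus (f y t) (f s t)) ((y - s) * df t)%C) <= K * (H * H))%R).
  { intros t Ht. rewrite norm_C_R. apply Hb; auto. }
  assert (N := @norm_RInt_le C_R_NormedModule _ (fun _ => (K * (H * H))%R) a b _ _ Hab Hbd I
                 (@is_RInt_const R_NormedModule a b (K * (H * H))%R)).
  rewrite norm_C_R in N.
  change (Cmod (RIntC (f y) a b - RIntC (f s) a b - (y - s) * RIntC df a b)
            <= (b - a) * (K * (H * H)))%R in N.
  eapply Rle_trans; [exact N|].
  apply Rle_trans with (K' * H * H)%R; [unfold K'; nra|]. nra.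
Qed.

Definition branch_on_piece (p : cpiece) (Bp : R -> C -> C) (U : C -> Prop) : Prop :=
  forall z, U z -> forall t, (pa p <= t <= pb p)%R ->
    fcub (pg p t) z <> RtoC 0 /\ Bp t z * Bp t z = fcub (pg p t) z /\
    filterlim (fun t' => Bp t' z)
      (within (fun t' => (pa p <= t' <= pb p)%R) (locally t)) (locally (Bp t z)) /\
    @ex_derive C_AbsRing C_NormedModule (fun w => Bp t w) z.

Section Piece.

Variables (p : cpiece) (Bp : R -> C -> C) (U : C -> Prop).
Hypothesis Hp : smooth_piece p.
Hypothesis HB : branch_on_piece p Bp U.

Lemma piece_le : (pa p <= pb p)%R.
Proof. destruct Hp. lra. Qed.

Lemma branch_neq0 z t : U z -> (pa p <= t <= pb p)%R -> Bp t z <> 0.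
Proof.
  intros Hz Ht E. destruct (HB z Hz t Ht) as [H1 [H2 _]].
  rewrite E in H2. apply H1. rewrite <- H2. ring.
Qed.

Lemma ccont_branch_clamp z t : U z -> @ccont R_AbsRing (fun y => Bp (clamp (pa p) (pb p) y) z) t.
Proof.
  intros Hz. apply (ccont_clamp (fun y => Bp y z)); [exact piece_le|].
  intros w Hw. apply ccont_within_filterlim, (HB z Hz w Hw).
Qed.

Lemma ccont_pdg_clamp t : @ccont R_AbsRing (fun y => pdg p (clamp (pa p) (pb p) y)) t.
Proof.
  destruct Hp as [_ [_ Hc]]. apply ccont_clamp; [exact piece_le|].
  intros w Hw. apply ccont_within_ccont, ccont_continuous, Hc, Hw.
Qed.

Lemma ccont_pg_clamp t : @ccont R_AbsRing (fun y => pg p (clamp (pa p) (pb p) y)) t.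
Proof.
  destruct Hp as [_ [Hd _]]. apply ccont_clamp; [exact piece_le|].
  intros w Hw. apply ccont_within_ccont. eapply ccont_is_derive_R, Hd, Hw.
Qed.

Lemma branch_clamp_neq0 z y : U z -> Bp (clamp (pa p) (pb p) y) z <> 0.
Proof. intros Hz. apply branch_neq0, clamp_in, piece_le. exact Hz. Qed.

Ltac piece_ccont :=
  ccont_auto;
  first [ apply ccont_branch_clamp | apply ccont_pdg_clamp | apply ccont_pg_clamp
        | repeat apply Cmult_neq_0; first [apply branch_clamp_neq0 | apply RtoC_neq0; lra]
        | idtac ];
  auto.

(* Extreme value theorem on the compact parameter interval. *)
Lemma branch_bounds s : U s ->
  exists m M Mg, (0 < m)%R /\ (0 <= Mg)%R /\ forall t, (pa p <= t <= pb p)%R ->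
    (m <= Cmod (Bp t s))%R /\ (Cmod (Bp t s) <= M)%R /\ (Cmod (pdg p t) <= Mg)%R.
Proof.
  intros Hs. assert (Hab := piece_le).
  assert (HcB : forall c, (pa p <= c <= pb p)%R ->
            continuity_pt (fun t => Cmod (Bp (clamp (pa p) (pb p) t) s)) c).
  { intros c _. apply continuity_pt_Cmod, ccont_branch_clamp, Hs. }
  destruct (continuity_ab_min _ _ _ Hab HcB) as [tm [Hm1 Hm2]].
  destruct (continuity_ab_maj _ _ _ Hab HcB) as [tM [HM1 HM2]].
  destruct (continuity_ab_maj (fun t => Cmod (pdg p (clamp (pa p) (pb p) t))) _ _ Hab)
    as [tg [Hg1 Hg2]].
  { intros c _. apply continuity_pt_Cmod, ccont_pdg_clamp. }
  exists (Cmod (Bp tm s)), (Cmod (Bp tM s)), (Cmod (pdg p tg)).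
  rewrite clamp_id in Hm1, HM1, Hg1 by auto.
  split; [apply Cmod_gt_0, branch_neq0; auto|]. split; [apply Cmod_ge_0|].
  intros t Ht. specialize (Hm1 t Ht). specialize (HM1 t Ht). specialize (Hg1 t Ht).
  rewrite clamp_id in Hm1, HM1, Hg1 by auto. auto.
Qed.

Section NearParameter.

Variables (s : C) (r : R).
Hypothesis Hr : (0 < r)%R.
Hypothesis Hball : forall z, (Cmod (z - s) < r)%R -> U z.

Lemma param_in_U : U s.
Proof. apply Hball. replace (s - s) with (RtoC 0) by ring. rewrite Cmod_0. exact Hr. Qed.

Lemma branch_near_param (m : R) t y :
  (0 < m)%R -> (m <= Cmod (Bp t s))%R -> (pa p <= t <= pb p)%R ->
  (Cmod (y - s) < Rmin r (m * m / 2))%R ->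
  Bp t y * Bp t y = Bp t s * Bp t s + (y - s) /\
  (Cmod (Bp t y - Bp t s) < Cmod (Bp t y + Bp t s))%R.
Proof.
  intros Hm Hmb Ht Hy.
  assert (Hy1 : (Cmod (y - s) < r)%R) by (eapply Rlt_le_trans; [exact Hy|apply Rmin_l]).
  assert (Hy2 : (Cmod (y - s) < m * m / 2)%R) by (eapply Rlt_le_trans; [exact Hy|apply Rmin_r]).
  assert (Hsq : forall z, (Cmod (z - s) < r)%R ->
            Bp t z * Bp t z = Bp t s * Bp t s + (z - s) /\ @ccont C_AbsRing (fun w => Bp t w) z).
  { intros z Hz. destruct (HB z (Hball z Hz) t Ht) as [_ [H1 [_ H2]]].
    destruct (HB s param_in_U t Ht) as [_ [H3 _]].
    split; [rewrite H1, H3, <- (fcub_sub_param (pg p t) s z); ring|].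
    apply ccont_is_derive_C, H2. }
  split; [exact (proj1 (Hsq y Hy1))|].
  replace y with (s + (y - s)) by ring.
  apply (branch_stays_near (fun w => Bp t w) s r m (y - s) Hm Hmb Hsq Hy1). nra.
Qed.

Lemma is_derive_piece_J :
  @is_derive C_AbsRing C_NormedModule
    (fun z => RIntC (fun t => Bp t z * pdg p t) (pa p) (pb p)) s
    (/ RtoC 2 * RIntC (fun t => RtoC 1 / Bp t s * pdg p t) (pa p) (pb p)).
Proof.
  assert (Hab := piece_le). assert (Hs := param_in_U).
  destruct (branch_bounds s Hs) as [m [M [Mg [Hm [HMg Hbd]]]]].
  assert (Hex : ex_RInt (fun t => RtoC 1 / Bp t s * pdg p t) (pa p) (pb p)).
  { apply ex_RInt_clamp; auto. intros t. piece_ccont. }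
  rewrite <- (@is_RInt_unique C_R_CompleteNormedModule _ _ _ _
               (is_RInt_Cmult_l _ _ _ _ (/ RtoC 2) (@RInt_correct C_R_CompleteNormedModule _ _ _ Hex))).
  apply (is_derive_RInt_param (fun z t => Bp t z * pdg p t) _ _ _ s (Rmin r (m * m / 2))
           (/ (m * m * m) * Mg)); auto.
  - apply Rmin_pos; nra.
  - apply Rmult_le_pos; auto. left. apply Rinv_0_lt_compat. repeat apply Rmult_lt_0_compat; lra.
  - intros y Hy. assert (Uy : U y) by (apply Hball; eapply Rlt_le_trans; [exact Hy|apply Rmin_l]).
    apply ex_RInt_clamp; auto. intros t. piece_ccont.
  - eexists. apply is_RInt_Cmult_l, (@RInt_correct C_R_CompleteNormedModule _ _ _ Hex).
  - intros y t Hy Ht. destruct (Hbd t Ht) as [Hb1 [_ Hb3]].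
    destruct (branch_near_param m t y Hm Hb1 Ht Hy) as [Hsq Hnear].
    assert (Hb0 : Bp t s <> 0) by (apply branch_neq0; auto).
    assert (Hy2 : (Cmod (y - s) <= m * m / 2)%R)
      by (left; eapply Rlt_le_trans; [exact Hy|apply Rmin_r]).
    assert (Est := branch_remainder_bound (Bp t y) (Bp t s) (y - s) m Hm Hb1 Hsq Hnear Hy2).
    replace (Bp t y * pdg p t - Bp t s * pdg p t - (y - s) * (/ RtoC 2 * (RtoC 1 / Bp t s * pdg p t)))
      with ((Bp t y - Bp t s - (y - s) / (RtoC 2 * Bp t s)) * pdg p t)
      by (field; repeat split; auto; apply RtoC_neq0; lra).
    rewrite Cmod_mult.
    replace (/ (m * m * m) * Mg * (Cmod (y - s) * Cmod (y - s)))%R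
      with (/ (m * m * m) * (Cmod (y - s) * Cmod (y - s)) * Mg)%R by ring.
    apply Rmult_le_compat; auto; apply Cmod_ge_0.
Qed.

Lemma is_derive_piece_L :
  @is_derive C_AbsRing C_NormedModule
    (fun z => RIntC (fun t => RtoC 1 / Bp t z * pdg p t) (pa p) (pb p)) s
    (- RIntC (fun t => RtoC 1 / (RtoC 2 * (Bp t s * Bp t s * Bp t s)) * pdg p t) (pa p) (pb p)).
Proof.
  assert (Hab := piece_le). assert (Hs := param_in_U).
  destruct (branch_bounds s Hs) as [m [M [Mg [Hm [HMg Hbd]]]]].
  assert (HmM : (m <= M)%R) by (destruct (Hbd (pa p)) as [A1 [A2 _]]; lra).
  assert (Hex : ex_RInt (fun t => RtoC 1 / (RtoC 2 * (Bp t s * Bp t s * Bp t s)) * pdg p t)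
                        (pa p) (pb p)).
  { apply ex_RInt_clamp; auto. intros t. piece_ccont. }
  replace (- RIntC (fun t => RtoC 1 / (RtoC 2 * (Bp t s * Bp t s * Bp t s)) * pdg p t) (pa p) (pb p))
    with (RtoC (-1) * RIntC (fun t => RtoC 1 / (RtoC 2 * (Bp t s * Bp t s * Bp t s)) * pdg p t)
                            (pa p) (pb p)) by ring.
  rewrite <- (@is_RInt_unique C_R_CompleteNormedModule _ _ _ _
               (is_RInt_Cmult_l _ _ _ _ (RtoC (-1)) (@RInt_correct C_R_CompleteNormedModule _ _ _ Hex))).
  assert (Hm6 : (0 < m * m * m * m * m * m)%R) by (repeat apply Rmult_lt_0_compat; lra).
  apply (is_derive_RInt_param (fun z t => RtoC 1 / Bp t z * pdg p t) _ _ _ s (Rmin r (m * m / 2))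
           ((m + 3 * M) * / (m * m * m * m * m * m) * Mg)); auto.
  - apply Rmin_pos; nra.
  - apply Rmult_le_pos; auto. apply Rmult_le_pos; [lra|]. left. apply Rinv_0_lt_compat, Hm6.
  - intros y Hy. assert (Uy : U y) by (apply Hball; eapply Rlt_le_trans; [exact Hy|apply Rmin_l]).
    apply ex_RInt_clamp; auto. intros t. piece_ccont.
  - eexists. apply is_RInt_Cmult_l, (@RInt_correct C_R_CompleteNormedModule _ _ _ Hex).
  - intros y t Hy Ht. destruct (Hbd t Ht) as [Hb1 [Hb2 Hb3]].
    destruct (branch_near_param m t y Hm Hb1 Ht Hy) as [Hsq Hnear].
    assert (Hb0 : Bp t s <> 0) by (apply branch_neq0; auto).
    assert (Hy0 : Bp t y <> 0).
    { apply branch_neq0; auto. apply Hball. eapply Rlt_le_trans; [exact Hy|apply Rmin_l]. }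
    assert (Hy2 : (Cmod (y - s) <= m * m / 2)%R)
      by (left; eapply Rlt_le_trans; [exact Hy|apply Rmin_r]).
    assert (Est := inv_branch_remainder_bound (Bp t y) (Bp t s) (y - s) m M Hm Hb1 Hb2 Hsq Hnear Hy2).
    replace (RtoC 1 / Bp t y * pdg p t - RtoC 1 / Bp t s * pdg p t
             - (y - s) * (RtoC (-1) * (RtoC 1 / (RtoC 2 * (Bp t s * Bp t s * Bp t s)) * pdg p t)))
      with ((RtoC 1 / Bp t y - RtoC 1 / Bp t s + (y - s) / (RtoC 2 * (Bp t s * Bp t s * Bp t s)))
            * pdg p t)
      by (field; repeat split; auto; apply RtoC_neq0; lra).
    rewrite Cmod_mult.
    replace ((m + 3 * M) * / (m * m * m * m * m * m) * Mg * (Cmod (y - s) * Cmod (y - s)))%R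
      with ((m + 3 * M) * / (m * m * m * m * m * m) * (Cmod (y - s) * Cmod (y - s)) * Mg)%R by ring.
    apply Rmult_le_compat; auto; apply Cmod_ge_0.
Qed.

End NearParameter.

Lemma is_RInt_piece_Q_derive s : U s -> s <> RtoC 0 -> s <> RtoC (-4/3) ->
  @is_RInt C_R_NormedModule
    (fun t => (RtoC 1 / (Bp t s * Bp t s * Bp t s) - rho s * Bp t s) * pdg p t) (pa p) (pb p)
    (rho s * Pp (pg p (pb p)) s / Bp (pb p) s - rho s * Pp (pg p (pa p)) s / Bp (pa p) s).
Proof.
  intros Hs Hs1 Hs2. destruct Hp as [Hab [Hgd _]].
  set (a := pa p) in *. set (b := pb p) in *.
  set (F := fun t => rho s * Pp (pg p t) s / Bp t s).
  set (f := fun t => (RtoC 1 / (Bp t s * Bp t s * Bp t s) - rho s * Bp t s) * pdg p t).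
  apply (@is_RInt_ext C_R_NormedModule (fun y => f (clamp a b y))).
  { intros x Hx. rewrite Rmin_left, Rmax_right in Hx by lra. rewrite clamp_id; auto. lra. }
  assert (HI := is_RInt_derive_interior (fun y => F (clamp a b y)) (fun y => f (clamp a b y)) a b Hab).
  cbv beta in HI. rewrite (clamp_id a b b), (clamp_id a b a) in HI by lra.
  apply HI.
  - intros t. unfold F. piece_ccont.
  - intros t. unfold f. piece_ccont.
  - intros t Ht. rewrite clamp_id by lra.
    apply (is_derive_ext_loc F).
    { assert (Hd : (0 < Rmin (t - a) (b - t))%R) by (apply Rmin_pos; lra).
      exists (mkposreal _ Hd).
      intros y Hy. simpl in Hy. change (Rabs (y - t) < Rmin (t - a) (b - t))%R in Hy.
      assert (T3 := Rmin_l (t - a) (b - t)). assert (T4 := Rmin_r (t - a) (b - t)).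
      apply Rabs_def2 in Hy. rewrite clamp_id; auto. lra. }
    apply (is_derive_Q_along (pg p) (fun t => Bp t s) (pdg p t) s a b t); auto.
    + apply Hgd. unfold a, b in *. lra.
    + apply ccont_within_filterlim, (HB s Hs t). unfold a, b in *. lra.
    + intros y Hy. split; [exact (proj1 (proj2 (HB s Hs y Hy)))|]. apply branch_neq0; auto.
Qed.

Lemma piece_K_eq s : U s -> s <> RtoC 0 -> s <> RtoC (-4/3) ->
  RIntC (fun t => RtoC 1 / (RtoC 2 * (Bp t s * Bp t s * Bp t s)) * pdg p t) (pa p) (pb p) =
  / RtoC 2 * ((rho s * Pp (pg p (pb p)) s / Bp (pb p) s - rho s * Pp (pg p (pa p)) s / Bp (pa p) s)
              + rho s * RIntC (fun t => Bp t s * pdg p t) (pa p) (pb p)).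
Proof.
  intros Hs Hs1 Hs2. assert (Hab := piece_le).
  assert (HexJ : ex_RInt (fun t => Bp t s * pdg p t) (pa p) (pb p)).
  { apply ex_RInt_clamp; auto. intros t. piece_ccont. }
  assert (I := is_RInt_Cmult_l _ _ _ _ (/ RtoC 2) (@is_RInt_plus C_R_NormedModule _ _ _ _ _ _
                 (is_RInt_piece_Q_derive s Hs Hs1 Hs2)
                 (is_RInt_Cmult_l _ _ _ _ (rho s) (@RInt_correct C_R_CompleteNormedModule _ _ _ HexJ)))).
  apply (@is_RInt_unique C_R_CompleteNormedModule).
  eapply (@is_RInt_ext C_R_NormedModule); [|exact I].
  intros t Ht. rewrite Rmin_left, Rmax_right in Ht by lra.
  assert (Hn : Bp t s <> 0) by (apply branch_neq0; auto; lra).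
  cbv beta. change (plus ?x ?y) with (x + y). match goal with |- ?x = ?y => change (@eq C x y) end.
  field. repeat split; auto; apply RtoC_neq0; lra.
Qed.

End Piece.

Lemma is_derive_csum (F : nat -> C -> C) (D : nat -> C) n s :
  (forall i, (i < n)%nat -> @is_derive C_AbsRing C_NormedModule (F i) s (D i)) ->
  @is_derive C_AbsRing C_NormedModule (fun z => csum n (fun i => F i z)) s (csum n D).
Proof.
  induction n as [|n IH]; intros Hd; simpl.
  - apply (@is_derive_const C_AbsRing C_NormedModule).
  - apply (@is_derive_plus C_AbsRing C_NormedModule).
    + apply IH. intros i Hi. apply Hd. lia.
    + apply Hd. lia.
Qed.

Lemma csum_ext n (a b : nat -> C) : (forall i, (i < n)%nat -> a i = b i) -> csum n a = csum n b.
Proof. induction n as [|n IH]; intros H; simpl; auto. rewrite IH, H; auto. Qed.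

Lemma csum_Cmult_l n (a : nat -> C) c : csum n (fun i => c * a i) = c * csum n a.
Proof. induction n as [|n IH]; simpl; [ring|]. rewrite IH. ring. Qed.

Lemma csum_plus n (a b : nat -> C) : csum n (fun i => a i + b i) = csum n a + csum n b.
Proof. induction n as [|n IH]; simpl; [ring|]. rewrite IH. ring. Qed.

Lemma csum_opp n (a : nat -> C) : csum n (fun i => - a i) = - csum n a.
Proof. induction n as [|n IH]; simpl; [ring|]. rewrite IH. ring. Qed.

Lemma csum_telescope_closed (E S0 : nat -> C) n :
  (0 < n)%nat -> (forall i, (S i < n)%nat -> E i = S0 (S i)) -> E (pred n) = S0 O ->
  csum n (fun i => E i - S0 i) = 0.
Proof.
  intros Hn Hj Hc.
  assert (G : forall m, (0 < m)%nat -> (m <= n)%nat ->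
            csum m (fun i => E i - S0 i) = E (pred m) - S0 O).
  { induction m as [|[|m] IH]; intros H1 H2; [lia|simpl; ring|].
    change (csum (S (S m)) (fun i => E i - S0 i))
      with (csum (S m) (fun i => E i - S0 i) + (E (S m) - S0 (S m))).
    rewrite IH by lia. simpl. rewrite (Hj m) by lia. ring. }
  rewrite G, Hc by lia. ring.
Qed.

Section Curve.

Variables (c : nat -> cpiece) (n : nat) (U : C -> Prop) (B : nat -> R -> C -> C).
Hypothesis Hc : closed_pw_smooth c n.
Hypothesis HB : branch_along c n U B.

Lemma branch_along_piece i : (i < n)%nat -> branch_on_piece (c i) (B i) U.
Proof. intros Hi z Hz t Ht. exact (proj1 (HB z Hz) i t Hi Ht). Qed.

Lemma piece_smooth i : (i < n)%nat -> smooth_piece (c i).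
Proof. destruct Hc as [_ [Hs _]]. exact (Hs i). Qed.

Hypothesis HU : @open C_UniformSpace U.

Lemma is_derive_contour_J s : U s ->
  @is_derive C_AbsRing C_NormedModule (fun z => cint c n (fun i t => B i t z)) s
    (cint c n (fun i t => RtoC 1 / B i t s) / RtoC 2).
Proof.
  intros Hs. destruct (locally_C_ball s U (HU s Hs)) as [r [Hr Hball]].
  unfold cint, Cdiv. rewrite Cmult_comm, <- csum_Cmult_l.
  apply (is_derive_csum (fun i z => RIntC (fun t => B i t z * pdg (c i) t) (pa (c i)) (pb (c i)))).
  intros i Hi.
  exact (is_derive_piece_J (c i) (B i) U (piece_smooth i Hi) (branch_along_piece i Hi) s r Hr Hball).
Qed.

Lemma is_derive_contour_L s : U s ->
  @is_derive C_AbsRing C_NormedModule (fun z => cint c n (fun i t => RtoC 1 / B i t z)) s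
    (- cint c n (fun i t => RtoC 1 / (RtoC 2 * (B i t s * B i t s * B i t s)))).
Proof.
  intros Hs. destruct (locally_C_ball s U (HU s Hs)) as [r [Hr Hball]].
  unfold cint. rewrite <- csum_opp.
  apply (is_derive_csum
           (fun i z => RIntC (fun t => RtoC 1 / B i t z * pdg (c i) t) (pa (c i)) (pb (c i)))).
  intros i Hi.
  exact (is_derive_piece_L (c i) (B i) U (piece_smooth i Hi) (branch_along_piece i Hi) s r Hr Hball).
Qed.

(* Integrating [dQ/du = 1/R^3 - rho R] piece by piece; the boundary values of [Q] telescope
   because the curve and the branch close up. *)
Lemma contour_K_eq s : U s -> s <> RtoC 0 -> s <> RtoC (-4/3) ->
  cint c n (fun i t => RtoC 1 / (RtoC 2 * (B i t s * B i t s * B i t s)))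
  = RtoC (1/2) * rho s * cint c n (fun i t => B i t s).
Proof.
  intros Hs Hs1 Hs2. destruct Hc as [Hn [_ [Hjun Hclo]]].
  set (Qb := fun i => rho s * Pp (pg (c i) (pb (c i))) s / B i (pb (c i)) s).
  set (Qa := fun i => rho s * Pp (pg (c i) (pa (c i))) s / B i (pa (c i)) s).
  unfold cint.
  rewrite (csum_ext n _ (fun i => / RtoC 2 * ((Qb i - Qa i)
             + rho s * RIntC (fun t => B i t s * pdg (c i) t) (pa (c i)) (pb (c i))))).
  2:{ intros i Hi.
      exact (piece_K_eq (c i) (B i) U (piece_smooth i Hi) (branch_along_piece i Hi) s Hs Hs1 Hs2). }
  rewrite csum_Cmult_l, csum_plus, csum_Cmult_l, (csum_telescope_closed Qb Qa n Hn).
  - rewrite RtoC_div by lra. field.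
  - intros i Hi. unfold Qb, Qa. rewrite (Hjun i Hi), (proj1 (proj2 (HB s Hs)) i Hi). reflexivity.
  - unfold Qb, Qa. rewrite Hclo, (proj2 (proj2 (HB s Hs))). reflexivity.
Qed.

End Curve.

Theorem proposition3 :
  (forall (s u : C) (Rb : C -> C),
     s <> RtoC 0 -> s <> RtoC (-4/3) ->
     Rb u <> RtoC 0 ->
     @ex_derive C_AbsRing C_NormedModule Rb u ->
     locally u (fun v => Rb v * Rb v = fcub v s) ->
     @is_derive C_AbsRing C_NormedModule
       (fun v => rho s * Pp v s / Rb v) u
       (RtoC 1 / (Rb u * Rb u * Rb u) - rho s * Rb u)) /\
  (forall (c : nat -> cpiece) (n : nat) (U : C -> Prop) (B : nat -> R -> C -> C),
     closed_pw_smooth c n ->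
     @open C_UniformSpace U ->
     branch_along c n U B ->
     let J := fun s => cint c n (fun i t => B i t s) in
     let L := fun s => cint c n (fun i t => RtoC 1 / B i t s) in
     let K := fun s => cint c n (fun i t => RtoC 1 / (RtoC 2 * (B i t s * B i t s * B i t s))) in
     forall s, U s ->
       @is_derive C_AbsRing C_NormedModule J s (L s / RtoC 2) /\
       @is_derive C_AbsRing C_NormedModule L s (- K s) /\
       (s <> RtoC 0 -> s <> RtoC (-4/3) -> K s = RtoC (1/2) * rho s * J s)).
Proof.
  split; [exact is_derive_Q|].
  intros c n U B Hc HU HB J L K s Hs.
  split; [|split].
  - exact (is_derive_contour_J c n U B Hc HB HU s Hs).
  - exact (is_derive_contour_L c n U B Hc HB HU s Hs).
  - exact (contour_K_eq c n U B Hc HB s Hs).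
Qed.
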